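(* Let $A\in\mathbb{R}^{N\times N}$, $b^{ex},e\in\mathbb{R}^N$ with $e\ne0$, $b=b^{ex}+e$, and let $m\ge1$ be such that $A^kb\ne0$ and $A^kb^{ex}\ne0$ for $0\le k\le m$. Define \[ \widetilde V_{m+1}=\left[\frac{b}{\|b\|},\frac{Ab}{\|Ab\|},\dots,\frac{A^{m}b}{\|A^{m}b\|}\right],\quad \widetilde V_{m+1}^{ex}=\left[\frac{b^{ex}}{\|b^{ex}\|},\frac{Ab^{ex}}{\|Ab^{ex}\|},\dots,\frac{A^{m}b^{ex}}{\|A^{m}b^{ex}\|}\right]. \] Let $r_m$ and $r_m^{ex}$ be the $m$-th GMRES residuals for $Ax=b$ and $Ax=b^{ex}$ respectively, and let $s^{ex}\in\mathbb{R}^{m+1}$ with first component $s^{ex}_1=0$ be such that $\|r_m^{ex}\|=\|b^{ex}-\widetilde V_{m+1}^{ex}s^{ex}\|$. Then \[ \|r_m\|\le\eta(m)\|e\|,\qquad \eta(m)=1+\frac{\|r_m^{ex}\|+\|(\widetilde V_{m+1}-\widetilde V_{m+1}^{ex})s^{ex}\|}{\|e\|}. \]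
   Context: GMRES with zero initial guess: the $m$-th residual $r_m=b-Ax_m$, where $x_m$ minimizes $\|b-Ax\|$ over $x\in\mathrm{span}\{b,Ab,\dots,A^{m-1}b\}$; equivalently $\|r_m\|=\min_{s\in\mathbb{R}^{m+1},\,s_1=0}\|b-\widetilde V_{m+1}s\|$, and analogously for $b^{ex}$ with $\widetilde V^{ex}_{m+1}$. Norms are Euclidean. *)

From mathcomp Require Import all_boot all_order all_algebra.
Set Implicit Arguments. Unset Strict Implicit. Unset Printing Implicit Defensive.
Import Order.TTheory GRing.Theory Num.Theory.
Local Open Scope ring_scope.

Definition enorm (R : rcfType) (n : nat) (v : 'cV[R]_n) : R :=
  Num.sqrt (\sum_(i < n) v i 0 ^+ 2).

Definition in_krylov (R : rcfType) (N m : nat) (A : 'M[R]_N) (b x : 'cV[R]_N) : Prop :=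
  exists c : 'I_m -> R, x = \sum_(k < m) c k *: (A ^+ k *m b).

(* r is the m-th GMRES residual (zero initial guess) for A x = b:
   r = b - A x_m with x_m minimizing ||b - A x|| over x in K_m(A, b). *)
Definition gmres_residual (R : rcfType) (N m : nat) (A : 'M[R]_N) (b r : 'cV[R]_N) : Prop :=
  exists xm : 'cV[R]_N,
    [/\ in_krylov m A b xm, r = b - A *m xm &
        forall x : 'cV[R]_N, in_krylov m A b x -> enorm r <= enorm (b - A *m x)].

Definition Vtilde (R : rcfType) (N m : nat) (A : 'M[R]_N) (b : 'cV[R]_N) : 'M[R]_(N, m.+1) :=
  \matrix_(i < N, j < m.+1) ((A ^+ j *m b) i 0 / enorm (A ^+ j *m b)).

From mathcomp Require Import all_boot all_order all_algebra.
From mathcomp Require Import ring lra.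
Set Implicit Arguments. Unset Strict Implicit. Unset Printing Implicit Defensive.
Import Order.TTheory GRing.Theory Num.Theory.
Local Open Scope ring_scope.

(* A vector [Vtilde b *m s] with [s_1 = 0] is [A x] for some [x] in the Krylov
   space K_m(A, b), so it competes in the GMRES minimisation for [b]. Writing
   [b - Vtilde b *m s] as [e + (bex - Vtilde bex *m sex) - (Vtilde b - Vtilde bex) *m sex]
   and applying the triangle inequality gives the bound. *)

Lemma lagrange_identity (R : comPzRingType) (n : nat) (u v : 'I_n -> R) :
  \sum_i \sum_j (u i * v j - u j * v i) ^+ 2 =
  2 * ((\sum_i u i ^+ 2) * (\sum_i v i ^+ 2) - (\sum_i u i * v i) ^+ 2).
Proof.
have expand i j : (u i * v j - u j * v i) ^+ 2 =
    u i ^+ 2 * v j ^+ 2 + u j ^+ 2 * v i ^+ 2 - 2 * (u i * v i * (u j * v j)).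
  by rewrite !expr2; ring.
under eq_bigr do under eq_bigr do rewrite expand.
under eq_bigr do rewrite sumrB big_split /=.
rewrite sumrB big_split /=.
have -> : \sum_i \sum_j u i ^+ 2 * v j ^+ 2 = (\sum_i u i ^+ 2) * (\sum_i v i ^+ 2).
  by rewrite mulr_suml; apply: eq_bigr => i _; rewrite mulr_sumr.
have -> : \sum_i \sum_j u j ^+ 2 * v i ^+ 2 = (\sum_i u i ^+ 2) * (\sum_i v i ^+ 2).
  rewrite mulrC mulr_suml; apply: eq_bigr => i _; rewrite mulr_sumr.
  by apply: eq_bigr => j _; rewrite mulrC.
have -> : \sum_i \sum_j 2 * (u i * v i * (u j * v j)) =
          2 * \sum_i (u i * v i * \sum_j u j * v j).
  by rewrite mulr_sumr; apply: eq_bigr => i _; rewrite !mulr_sumr.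
by rewrite -mulr_suml; ring.
Qed.

Lemma cauchy_schwarz_sum (R : realDomainType) (n : nat) (u v : 'I_n -> R) :
  (\sum_i u i * v i) ^+ 2 <= (\sum_i u i ^+ 2) * (\sum_i v i ^+ 2).
Proof.
have : 0 <= \sum_i \sum_j (u i * v j - u j * v i) ^+ 2.
  by apply: sumr_ge0 => i _; apply: sumr_ge0 => j _; exact: sqr_ge0.
by rewrite lagrange_identity pmulr_rge0 // subr_ge0.
Qed.

Section EuclideanNorm.
Variables (R : rcfType) (n : nat).
Implicit Types u v : 'cV[R]_n.

Lemma enorm_ge0 v : 0 <= enorm v.
Proof. exact: sqrtr_ge0. Qed.

Lemma enorm_gt0 v : v != 0 -> 0 < enorm v.
Proof.
move=> v_neq0; rewrite lt_def enorm_ge0 andbT; apply: contra v_neq0.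
rewrite sqrtr_eq0 => sum_le0.
have sum_eq0 : \sum_i v i 0 ^+ 2 = 0.
  by apply/eqP; rewrite eq_le sum_le0 sumr_ge0 // => i _; exact: sqr_ge0.
apply/eqP/matrixP => i j; rewrite ord1 mxE; apply/eqP; rewrite -sqrf_eq0.
by apply/eqP; apply: (psumr_eq0P _ sum_eq0) => // k _; exact: sqr_ge0.
Qed.

Lemma enormN v : enorm (- v) = enorm v.
Proof. by rewrite /enorm; congr Num.sqrt; apply: eq_bigr => i _; rewrite mxE sqrrN. Qed.

Lemma ler_enormD u v : enorm (u + v) <= enorm u + enorm v.
Proof.
rewrite /enorm; set a := \sum_i u i 0 ^+ 2; set b := \sum_i v i 0 ^+ 2.
have a_ge0 : 0 <= a by apply: sumr_ge0 => i _; exact: sqr_ge0.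
have b_ge0 : 0 <= b by apply: sumr_ge0 => i _; exact: sqr_ge0.
have sqr_sum : \sum_i (u + v) i 0 ^+ 2 = a + b + 2 * \sum_i u i 0 * v i 0.
  rewrite /a /b -big_split /= mulr_sumr -big_split /=.
  by apply: eq_bigr => i _; rewrite mxE; ring.
have dot_le : \sum_i u i 0 * v i 0 <= Num.sqrt a * Num.sqrt b.
  rewrite -sqrtrM // (le_trans (ler_norm _)) // -sqrtr_sqr ler_sqrt ?mulr_ge0 //.
  exact: cauchy_schwarz_sum.
rewrite sqr_sum -[X in _ <= X]ger0_norm ?addr_ge0 ?sqrtr_ge0 //.
rewrite -sqrtr_sqr ler_sqrt ?sqr_ge0 // sqrrD !sqr_sqrtr //.
lra.
Qed.

End EuclideanNorm.

Lemma Vtilde_mulmx_krylov (R : rcfType) (N m : nat) (A : 'M[R]_N) (b : 'cV[R]_N)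
    (s : 'cV[R]_m.+1) :
  s ord0 0 = 0 -> exists2 x, in_krylov m A b x & A *m x = Vtilde m A b *m s.
Proof.
move=> s0.
pose c (k : 'I_m) := s (lift ord0 k) 0 / enorm (A ^+ k.+1 *m b).
exists (\sum_(k < m) c k *: (A ^+ k *m b)); first by exists c.
apply/matrixP => i j; rewrite ord1 mulmx_sumr summxE !mxE big_ord_recl !mxE.
rewrite s0 mulr0 add0r; apply: eq_bigr => k _.
rewrite -scalemxAr mulmxA.
have -> : A *m A ^+ k = A ^+ k.+1 by rewrite exprS mulmxE.
rewrite !mxE /c /= /bump /= add1n.
by ring.
Qed.

Lemma gmres_residual_le_Vtilde (R : rcfType) (N m : nat) (A : 'M[R]_N)
    (b r : 'cV[R]_N) (s : 'cV[R]_m.+1) :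
  gmres_residual m A b r -> s ord0 0 = 0 ->
  enorm r <= enorm (b - Vtilde m A b *m s).
Proof.
move=> [xm [_ _ r_min]] /(Vtilde_mulmx_krylov A b) [x x_krylov <-].
exact: r_min.
Qed.

Theorem proposition2 (R : rcfType) (N m : nat) (A : 'M[R]_N) (bex e : 'cV[R]_N)
  (rm rmex : 'cV[R]_N) (sex : 'cV[R]_m.+1) :
  e != 0 ->
  (1 <= m)%N ->
  (forall k : nat, (k <= m)%N -> A ^+ k *m (bex + e) != 0) ->
  (forall k : nat, (k <= m)%N -> A ^+ k *m bex != 0) ->
  gmres_residual m A (bex + e) rm ->
  gmres_residual m A bex rmex ->
  sex ord0 0 = 0 ->
  enorm rmex = enorm (bex - Vtilde m A bex *m sex) ->
  enorm rm <=
    (1 + (enorm rmex + enorm ((Vtilde m A (bex + e) - Vtilde m A bex) *m sex)) / enorm e)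
    * enorm e.
Proof.
move=> e_neq0 _ _ _ rm_gmres _ sex0 rmex_eq.
rewrite mulrDl mul1r mulfVK ?gt_eqF ?enorm_gt0 // addrA rmex_eq.
set V := Vtilde m A (bex + e); set Vex := Vtilde m A bex.
apply: (le_trans (gmres_residual_le_Vtilde rm_gmres sex0)).
have -> : bex + e - V *m sex = e + (bex - Vex *m sex) + - ((V - Vex) *m sex).
  by rewrite mulmxBl; apply/matrixP => i j; rewrite !mxE; ring.
apply: (le_trans (ler_enormD _ _)); rewrite enormN lerD2r.
exact: ler_enormD.
Qed.
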